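(* Let $k\ge n\ge 3$, let $\pi$ assign to each $n$-element subset $S\subseteq[k]$ a string $\pi(S)$ of length $n$ that is an ordering of $S$, let $Q\subseteq[k]$ with $|Q|=n-2$, and let $R,R'\in\mathcal U_Q$ be distinct. Suppose $R$ freezes $A_R\subseteq R$ with freezing function $g_R$ and $R'$ freezes $A_{R'}\subseteq R'$ with freezing function $g_{R'}$. Then $g_R(a)=g_{R'}(a)$ for every $a\in A_R\cap A_{R'}$.
   Context: $[k]=\{1,\dots,k\}$; $\pi(S)[i]$ is the letter at position $i\in[n]$ of $\pi(S)$. For a set $R\subseteq[k]$, $\mathcal U_R$ is the set of all sets $S\subseteq[k]$ with $R\subset S$ and $|S|=|R|+1$. For $|R|=n-1$ and $A_R\subseteq R$, $R$ freezes $A_R$ (with freezing function $g_R$) if there is a one-to-one map $g_R:A_R\to[n]$ such that $\pi(S)[g_R(a)]=a$ for all $a\in A_R$ and all $S\in\mathcal U_R$. *)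

From mathcomp Require Import all_boot.
Set Implicit Arguments. Unset Strict Implicit. Unset Printing Implicit Defensive.

(* Conventions: the alphabet [k] = {1..k} is modelled by 'I_k (letter i+1 <-> i),
   positions [n] = {1..n} by 'I_n (position j+1 <-> j).
   pi S is an n-tuple; (pi S)[i] is tnth (pi S) i. *)

Definition is_ordering (k n : nat) (S : {set 'I_k}) (w : n.-tuple 'I_k) : Prop :=
  uniq w /\ (forall x, (x \in w) = (x \in S)).

Definition valid_pi (k n : nat) (pi : {set 'I_k} -> n.-tuple 'I_k) : Prop :=
  forall S : {set 'I_k}, #|S| = n -> is_ordering S (pi S).

Definition in_U (k : nat) (R S : {set 'I_k}) : Prop :=
  R \proper S /\ #|S| = #|R|.+1.

Definition freezes_with (k n : nat) (pi : {set 'I_k} -> n.-tuple 'I_k)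
    (R A : {set 'I_k}) (g : 'I_k -> 'I_n) : Prop :=
  [/\ #|R| = n.-1, A \subset R, {in A &, injective g} &
      forall a S, a \in A -> in_U R S -> tnth (pi S) (g a) = a].

From mathcomp Require Import all_boot.
From mathcomp Require Import zify.

Set Implicit Arguments. Unset Strict Implicit. Unset Printing Implicit Defensive.

(* Two distinct sets R, R' of U_Q are Q plus one letter each, so
   their union S = R :|: R' has #|Q| + 2 = n elements and is a one-letter
   extension of both R and R'; that is, S lies in U_R and in U_R'.  Applying
   the freezing property of R and of R' to this common extension S, the letter
   a sits at position g a and at position g' a of the string pi S.  Since pi S
   is an ordering of S, it has no repeated letters, so a occupies a single
   position and g a = g' a. *)

Section Siblings.

Variables (k : nat) (Q R R' : {set 'I_k}).
Hypotheses (hR : in_U Q R) (hR' : in_U Q R') (hRR' : R != R').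

Lemma card_siblings_meet : #|R :&: R'| = #|Q|.
Proof.
case: hR hR' => /proper_sub sQR cR [/proper_sub sQR' cR'].
have lower : #|Q| <= #|R :&: R'| by apply/subset_leq_card; rewrite subsetI sQR.
have upper : #|R :&: R'| < #|R|.
  rewrite ltn_neqAle subset_leq_card ?subsetIl // andbT.
  apply: contra hRR' => /eqP cI.
  have /eqP RI : R :&: R' == R by rewrite eqEcard subsetIl cI leqnn.
  by rewrite eqEcard -{1}RI subsetIr cR cR' leqnn.
by apply/eqP; rewrite eqn_leq lower -ltnS -cR upper.
Qed.

Lemma card_siblings_join : #|R :|: R'| = #|Q|.+2.
Proof.
have cUI := cardsUI R R'; rewrite card_siblings_meet in cUI.
case: hR hR' => _ cR [_ cR']; lia.
Qed.

Lemma siblings_join_in_U : in_U R (R :|: R').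
Proof.
case: hR => _ cR.
split; last by rewrite card_siblings_join cR.
by rewrite properEcard subsetUl card_siblings_join cR /=.
Qed.

End Siblings.

Lemma uniq_position (T : eqType) (n : nat) (w : n.-tuple T) (i j : 'I_n) :
  uniq w -> tnth w i = tnth w j -> i = j.
Proof. by move=> /tuple_uniqP inj_w /inj_w. Qed.

Theorem lemma3p7 (k n : nat) (hn : 3 <= n) (hnk : n <= k)
    (pi : {set 'I_k} -> n.-tuple 'I_k) (hpi : valid_pi pi)
    (Q R R' : {set 'I_k}) (hQ : #|Q| = n - 2)
    (hR : in_U Q R) (hR' : in_U Q R') (hRR' : R != R')
    (A A' : {set 'I_k}) (g g' : 'I_k -> 'I_n)
    (hfr : freezes_with pi R A g) (hfr' : freezes_with pi R' A' g') :
  forall a, a \in A -> a \in A' -> g a = g' a.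
Proof.
move=> a aA aA'.
case: hfr hfr' => _ _ _ frozen [_ _ _ frozen'].
have cS : #|R :|: R'| = n by rewrite (card_siblings_join hR hR' hRR') hQ; lia.
have [uniq_piS _] := hpi _ cS.
have in_UR : in_U R (R :|: R') := siblings_join_in_U hR hR' hRR'.
have in_UR' : in_U R' (R :|: R').
  by rewrite setUC; apply: siblings_join_in_U hR' hR _; rewrite eq_sym.
apply: uniq_position uniq_piS _.
by rewrite frozen // frozen'.
Qed.
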